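(* The hybrid logic $\mathbf{IB(@)}$ is decidable; that is, the set of hybrid formulas $\varphi$ such that $\mathcal{M},w\models\varphi$ for every orthomodel $\mathcal{M}$ and every world $w$ of $\mathcal{M}$ is decidable.
   Context: Hybrid language: fix disjoint countably infinite sets $\mathbf{Prop}$ (propositional variables) and $\mathbf{Nom}$ (nominals). Formulas: $\varphi ::= p \mid i \mid \neg\varphi \mid \varphi\land\varphi \mid \Diamond\varphi \mid @_i\varphi$ with $p\in\mathbf{Prop}$, $i\in\mathbf{Nom}$. A model $\mathcal{M}=(W,R,V)$ has $W$ nonempty, $R\subseteq W\times W$, and $V:\mathbf{Prop}\cup\mathbf{Nom}\to\mathcal{P}(W)$ with $V(i)=\{i^V\}$ a singleton for each nominal $i$. Satisfaction: $\mathcal{M},w\models p$ iff $w\in V(p)$; $\mathcal{M},w\models i$ iff $w=i^V$; Boolean clauses as usual; $\mathcal{M},w\models\Diamond\varphi$ iff there is $v$ with $wRv$ and $\mathcal{M},v\models\varphi$; $\mathcal{M},w\models @_i\varphi$ iff $\mathcal{M},i^V\models\varphi$. An orthoframe is a pair $(W,R)$ with $R$ irreflexive and symmetric; an orthomodel is a model whose frame is an orthoframe. $\mathbf{IB(@)}$ is the hybrid logic of the class of all orthoframes (axiomatized by the basic hybrid logic $\mathbf{K(@)}$ plus $@_i\neg\Diamond i$ and $@_i\neg\Diamond\neg\Diamond i$). *)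

From Stdlib Require Import List Arith.
Import ListNotations.

Inductive form : Type :=
| PVar : nat -> form
| Nom  : nat -> form
| Neg  : form -> form
| And  : form -> form -> form
| Dia  : form -> form
| At   : nat -> form -> form.

(** * Satisfaction.  A model (W,R,V) is given by [R], the valuation [V] of
    propositional variables, and for nominals the function [N] with
    V(i) = {N i} (i.e. N i = i^V). *)
Fixpoint sat {W : Type} (R : W -> W -> Prop) (V : nat -> W -> Prop)
         (N : nat -> W) (w : W) (phi : form) : Prop :=
  match phi with
  | PVar p => V p w
  | Nom i => w = N i
  | Neg a => ~ sat R V N w a
  | And a b => sat R V N w a /\ sat R V N w b
  | Dia a => exists v, R w v /\ sat R V N v a
  | At i a => sat R V N (N i) a
  end.

Definition orthoframe {W : Type} (R : W -> W -> Prop) : Prop :=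
  (forall w, ~ R w w) /\ (forall w v, R w v -> R v w).

Definition IB_valid (phi : form) : Prop :=
  forall (W : Type) (R : W -> W -> Prop) (V : nat -> W -> Prop) (N : nat -> W),
    orthoframe R -> forall w : W, sat R V N w phi.

(** * Goedel numbering of formulas (Cantor pairing). *)
Definition pair (a b : nat) : nat := (a + b) * (a + b + 1) / 2 + b.

Fixpoint code (phi : form) : nat :=
  match phi with
  | PVar p => pair 0 p
  | Nom i => pair 1 i
  | Neg a => pair 2 (code a)
  | And a b => pair 3 (pair (code a) (code b))
  | Dia a => pair 4 (code a)
  | At i a => pair 5 (pair i (code a))
  end.

Inductive recf : Type :=
| RZero : recf
| RSucc : recf
| RProj : nat -> recf
| RComp : recf -> list recf -> recf
| RPrec : recf -> recf -> recf
| RMu   : recf -> recf.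

Inductive ev : recf -> list nat -> nat -> Prop :=
| ev_zero : forall v, ev RZero v 0
| ev_succ : forall x v, ev RSucc (x :: v) (S x)
| ev_proj : forall i v, i < length v -> ev (RProj i) v (nth i v 0)
| ev_comp : forall f gs v ws y, evs gs v ws -> ev f ws y -> ev (RComp f gs) v y
| ev_prec0 : forall f g v y, ev f v y -> ev (RPrec f g) (0 :: v) y
| ev_precS : forall f g n v y z,
    ev (RPrec f g) (n :: v) y -> ev g (n :: y :: v) z ->
    ev (RPrec f g) (S n :: v) z
| ev_mu : forall f v n,
    ev f (n :: v) 0 ->
    (forall m, m < n -> exists k, ev f (m :: v) (S k)) ->
    ev (RMu f) v n
with evs : list recf -> list nat -> list nat -> Prop :=
| evs_nil : forall v, evs [] v []
| evs_cons : forall g gs v y ys, ev g v y -> evs gs v ys -> evs (g :: gs) v (y :: ys).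

Definition decidable_form_set (P : form -> Prop) : Prop :=
  exists f : recf, forall phi : form,
    (P phi -> ev f [code phi] 0) /\ (~ P phi -> ev f [code phi] 1).

(* IB(@) has a computable finite model property.  Filtrating an orthomodel
   through the subformulas of phi identifies worlds with the same profile (set of
   true subformulas).  To keep the frame irreflexive, each class comes in two
   copies and related classes are joined across copies of opposite parity; the
   class of a nominal is a single world, so it keeps one copy and is joined to
   every copy, irreflexivity being inherited from the original frame.  Hence phi
   is valid iff it holds in every orthomodel on the worlds below
   N = 2 ^ (code phi + 2).  Such models are coded by three bounded numbers, and a
   primitive recursive function runs through all of them, computing in each the
   truth table of the formulas with code at most code phi by course-of-values
   recursion on codes. *)

From Stdlib Require Import List Arith Lia Bool Cantor Classical ClassicalEpsilon.
Import ListNotations.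

(** * Primitive recursive programs *)

(* [RMu] and missing arguments get junk values; [prim_arity] rules both out. *)
Fixpoint eval (f : recf) (v : list nat) : nat :=
  match f with
  | RZero => 0
  | RSucc => S (hd 0 v)
  | RProj i => nth i v 0
  | RComp h gs => eval h (map (fun g => eval g v) gs)
  | RPrec a b =>
      match v with
      | [] => 0
      | x :: w => nat_rec (fun _ => nat) (eval a w) (fun k y => eval b (k :: y :: w)) x
      end
  | RMu _ => 0
  end.

Fixpoint prim_arity (f : recf) (n : nat) : bool :=
  match f with
  | RZero => true
  | RSucc => 0 <? n
  | RProj i => i <? n
  | RComp h gs => prim_arity h (length gs) && forallb (fun g => prim_arity g n) gs
  | RPrec a b => (0 <? n) && prim_arity a (n - 1) && prim_arity b (S n)
  | RMu _ => false
  end.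

Lemma recf_nested_ind (P : recf -> Prop) :
  P RZero -> P RSucc -> (forall i, P (RProj i)) ->
  (forall h gs, P h -> Forall P gs -> P (RComp h gs)) ->
  (forall a b, P a -> P b -> P (RPrec a b)) -> (forall a, P a -> P (RMu a)) ->
  forall f, P f.
Proof.
  intros HZ HS HP HC HR HM. fix IH 1. intros [ | | i | h gs | a b | a].
  - exact HZ.
  - exact HS.
  - apply HP.
  - apply HC; [apply IH |].
    induction gs as [| g gs IHgs]; constructor; [apply IH | exact IHgs].
  - apply HR; apply IH.
  - apply HM, IH.
Qed.

Lemma ev_eval f v : prim_arity f (length v) = true -> ev f v (eval f v).
Proof.
  revert v. induction f as [| | i | h gs IHh IHgs | a b IHa IHb | a _] using recf_nested_ind;
    intros v Hf; cbn [prim_arity eval] in *.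
  - constructor.
  - destruct v as [| x v]; [discriminate | constructor].
  - apply Nat.ltb_lt in Hf. now constructor.
  - apply andb_prop in Hf as [Hh Hgs]. apply ev_comp with (ws := map (fun g => eval g v) gs).
    + clear Hh IHh. induction IHgs as [| g gs Hg _ IH]; cbn in *; constructor;
        apply andb_prop in Hgs as [Hg' Hgs]; auto.
    + apply IHh. now rewrite length_map.
  - destruct v as [| x w]; [discriminate |]. cbn [length] in Hf.
    apply andb_prop in Hf as [Hf Hb]. apply andb_prop in Hf as [_ Ha].
    rewrite Nat.sub_1_r in Ha. cbn [Nat.pred] in Ha.
    induction x as [| x IHx]; cbn; econstructor; eauto.
  - discriminate.
Qed.

Lemma eval_prec_succ a b k w :
  eval (RPrec a b) (S k :: w) = eval b (k :: eval (RPrec a b) (k :: w) :: w).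
Proof. reflexivity. Qed.

Notation "# i" := (RProj i) (at level 0, i at level 0).

Definition succ_p (g : recf) : recf := RComp RSucc [g].

Definition const_p (k : nat) : recf := Nat.iter k succ_p RZero.
Lemma eval_const k v : eval (const_p k) v = k.
Proof. induction k as [| k IHk]; cbn; auto. Qed.
Opaque const_p.

Definition add_p : recf := RPrec #0 (succ_p #1).
Lemma eval_add a b : eval add_p [a; b] = a + b.
Proof. induction a as [| a IHa]; cbn in *; auto. Qed.
Opaque add_p.

Definition mul_p : recf := RPrec RZero (RComp add_p [#1; #2]).
Lemma eval_mul a b : eval mul_p [a; b] = a * b.
Proof. induction a as [| a IHa]; cbn in *; auto. rewrite eval_add, IHa. lia. Qed.
Opaque mul_p.

Definition pred_p : recf := RPrec RZero #0.
Lemma eval_pred a : eval pred_p [a] = Nat.pred a.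
Proof. now destruct a. Qed.
Opaque pred_p.

Definition sub_p : recf := RComp (RPrec #0 (RComp pred_p [#1])) [#1; #0].
Lemma eval_sub a b : eval sub_p [a; b] = a - b.
Proof.
  cbn. induction b as [| b IHb]; cbn in *; [lia |]. rewrite IHb, eval_pred. lia.
Qed.
Opaque sub_p.

Definition ifz_p : recf := RPrec #0 #3.
Lemma eval_ifz a b c : eval ifz_p [a; b; c] = match a with 0 => b | S _ => c end.
Proof. now destruct a. Qed.
Opaque ifz_p.

Definition pow2_p : recf := RPrec (const_p 1) (RComp add_p [#1; #1]).
Lemma eval_pow2 a : eval pow2_p [a] = 2 ^ a.
Proof. induction a as [| a IHa]; cbn in *; auto. rewrite eval_add, IHa. lia. Qed.
Opaque pow2_p.

Definition odd_p : recf := RPrec RZero (RComp sub_p [const_p 1; #1]).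
Lemma eval_odd a : eval odd_p [a] = Nat.b2n (Nat.odd a).
Proof.
  induction a as [| a IHa]; cbn in *; auto.
  rewrite eval_const, eval_sub, IHa, Nat.odd_succ, <- Nat.negb_odd.
  now destruct (Nat.odd a).
Qed.
Opaque odd_p.

Lemma div2_succ a : Nat.div2 (S a) = Nat.div2 a + Nat.b2n (Nat.odd a).
Proof.
  rewrite (Nat.div2_odd a) at 1. destruct (Nat.odd a); cbn [Nat.b2n].
  - replace (S (2 * Nat.div2 a + 1)) with (2 * S (Nat.div2 a)) by lia.
    rewrite Nat.div2_double. lia.
  - rewrite Nat.add_0_r, Nat.div2_succ_double. lia.
Qed.

Definition div2_p : recf := RPrec RZero (RComp add_p [#1; RComp odd_p [#0]]).
Lemma eval_div2 a : eval div2_p [a] = Nat.div2 a.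
Proof.
  induction a as [| a IHa]; auto. rewrite div2_succ. cbn in *.
  now rewrite eval_odd, eval_add, IHa.
Qed.
Opaque div2_p.

Definition testbit_p : recf :=
  RComp odd_p [RComp (RPrec #0 (RComp div2_p [#1])) [#1; #0]].
Lemma testbit_iter_div2 a m : Nat.testbit a m = Nat.odd (Nat.iter m Nat.div2 a).
Proof.
  revert a. induction m as [| m IHm]; intros a; [reflexivity |].
  now rewrite <- Nat.testbit_div2, IHm, <- Nat.iter_succ_r.
Qed.

Lemma eval_testbit a m : eval testbit_p [a; m] = Nat.b2n (Nat.testbit a m).
Proof.
  rewrite testbit_iter_div2, <- eval_odd. cbn. do 2 f_equal.
  induction m as [| m IHm]; cbn in *; auto. now rewrite IHm, eval_div2.
Qed.
Opaque testbit_p.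

Definition not_p : recf := RComp sub_p [const_p 1; #0].
Lemma eval_not x : eval not_p [Nat.b2n x] = Nat.b2n (negb x).
Proof. cbn. rewrite eval_const, eval_sub. now destruct x. Qed.
Opaque not_p.

Lemma eval_and x y : eval mul_p [Nat.b2n x; Nat.b2n y] = Nat.b2n (x && y).
Proof. rewrite eval_mul. now destruct x, y. Qed.

Definition or_p : recf := RComp ifz_p [#0; #1; const_p 1].
Lemma eval_or x y : eval or_p [Nat.b2n x; Nat.b2n y] = Nat.b2n (x || y).
Proof. cbn. rewrite eval_const, eval_ifz. now destruct x, y. Qed.
Opaque or_p.

Definition eqb_p : recf :=
  RComp ifz_p [RComp add_p [RComp sub_p [#0; #1]; RComp sub_p [#1; #0]]; const_p 1; const_p 0].
Lemma eval_eqb a b : eval eqb_p [a; b] = Nat.b2n (a =? b).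
Proof.
  cbn. rewrite !eval_sub, eval_add, !eval_const, eval_ifz.
  destruct (Nat.eqb_spec a b) as [-> | Hab]; [now rewrite Nat.sub_diag |].
  now destruct (a - b + (b - a)) eqn:E; [lia |].
Qed.
Opaque eqb_p.

Definition projs (k n : nat) : list recf := map RProj (seq k n).

Lemma map_eval_projs v k l : length l = k ->
  map (fun g => eval g (l ++ v)) (projs k (length v)) = v.
Proof.
  revert k l. induction v as [| x v IH]; intros k l Hl; auto.
  cbn. f_equal.
  - rewrite app_nth2 by lia. now replace (k - length l) with 0 by lia.
  - specialize (IH (S k) (l ++ [x])). rewrite <- app_assoc in IH.
    apply IH. rewrite length_app. cbn. lia.
Qed.

Definition loop (n : nat) (B I S : recf) : recf := RComp (RPrec I S) (B :: projs 0 n).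
Lemma eval_loop n B I S v : length v = n ->
  eval (loop n B I S) v =
  nat_rec (fun _ => nat) (eval I v) (fun k y => eval S (k :: y :: v)) (eval B v).
Proof.
  intros <-. unfold loop. cbn [eval map].
  pose proof (map_eval_projs v 0 [] eq_refl) as Hv. cbn [app] in Hv. now rewrite Hv.
Qed.

Definition skip_acc (n : nat) (P : recf) : recf := RComp P (#0 :: projs 2 n).
Lemma eval_skip_acc n P k y v : length v = n ->
  eval (skip_acc n P) (k :: y :: v) = eval P (k :: v).
Proof.
  intros <-. unfold skip_acc. cbn [eval map].
  pose proof (map_eval_projs v 2 [k; y] eq_refl) as Hv. cbn [app] in Hv. now rewrite Hv.
Qed.
Opaque loop skip_acc.

Fixpoint all_below (n : nat) (f : nat -> bool) : bool :=
  match n with 0 => true | S n => all_below n f && f n end.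
Fixpoint ex_below (n : nat) (f : nat -> bool) : bool :=
  match n with 0 => false | S n => ex_below n f || f n end.
Fixpoint bits (n : nat) (f : nat -> bool) : nat :=
  match n with 0 => 0 | S n => bits n f + 2 ^ n * Nat.b2n (f n) end.
Fixpoint last_below (n : nat) (f : nat -> bool) : nat :=
  match n with 0 => 0 | S n => if f n then n else last_below n f end.

Definition all_p n B P := loop n B (const_p 1) (RComp mul_p [#1; skip_acc n P]).
Definition ex_p n B P := loop n B (const_p 0) (RComp or_p [#1; skip_acc n P]).
Definition bits_p n B P :=
  loop n B (const_p 0) (RComp add_p [#1; RComp mul_p [RComp pow2_p [#0]; skip_acc n P]]).
Definition last_p n B P := loop n B (const_p 0) (RComp ifz_p [skip_acc n P; #1; #0]).

Section BoundedLoops.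
Variables (n : nat) (B P : recf) (v : list nat) (f : nat -> bool).
Hypothesis Hv : length v = n.
Hypothesis HP : forall k, eval P (k :: v) = Nat.b2n (f k).

Lemma eval_all : eval (all_p n B P) v = Nat.b2n (all_below (eval B v) f).
Proof.
  unfold all_p. rewrite eval_loop by auto. induction (eval B v) as [| k IHk]; [apply eval_const |].
  cbn [nat_rec nat_rect] in *. rewrite IHk. cbn [eval map nth].
  rewrite eval_skip_acc, HP, eval_and by auto. reflexivity.
Qed.

Lemma eval_ex : eval (ex_p n B P) v = Nat.b2n (ex_below (eval B v) f).
Proof.
  unfold ex_p. rewrite eval_loop by auto. induction (eval B v) as [| k IHk]; [apply eval_const |].
  cbn [nat_rec nat_rect] in *. rewrite IHk. cbn [eval map nth].
  rewrite eval_skip_acc, HP, eval_or by auto. reflexivity.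
Qed.

Lemma eval_bits : eval (bits_p n B P) v = bits (eval B v) f.
Proof.
  unfold bits_p. rewrite eval_loop by auto. induction (eval B v) as [| k IHk]; [apply eval_const |].
  cbn [nat_rec nat_rect] in *. rewrite IHk. cbn [eval map nth].
  rewrite eval_skip_acc, HP, eval_pow2, eval_mul, eval_add by auto. reflexivity.
Qed.

Lemma eval_last : eval (last_p n B P) v = last_below (eval B v) f.
Proof.
  unfold last_p. rewrite eval_loop by auto. induction (eval B v) as [| k IHk]; [apply eval_const |].
  cbn [nat_rec nat_rect] in *. rewrite IHk. cbn [eval map nth].
  rewrite eval_skip_acc, HP, eval_ifz by auto. cbn [last_below]. now destruct (f k).
Qed.
End BoundedLoops.
Opaque all_p ex_p bits_p last_p.

Lemma all_below_spec n f : all_below n f = true <-> (forall i, i < n -> f i = true).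
Proof.
  induction n as [| n IHn]; cbn; [split; auto; lia |].
  rewrite andb_true_iff, IHn. split.
  - intros [H Hn] i Hi. destruct (Nat.eq_dec i n) as [-> |]; auto with arith.
    apply H. lia.
  - auto.
Qed.

Lemma ex_below_spec n f : ex_below n f = true <-> (exists i, i < n /\ f i = true).
Proof.
  induction n as [| n IHn]; cbn.
  - split; [discriminate | intros (i & Hi & _); lia].
  - rewrite orb_true_iff, IHn. split.
    + intros [(i & Hi & H) | H]; eauto.
    + intros (i & Hi & H). destruct (Nat.eq_dec i n) as [-> |]; auto.
      left. exists i. split; auto. lia.
Qed.

Lemma last_below_lt n f : 0 < n -> last_below n f < n.
Proof.
  induction n as [| n IHn]; intros Hn; [lia |]. cbn [last_below].
  destruct (f n); [lia |]. destruct n as [| n]; [cbn; lia |].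
  specialize (IHn ltac:(lia)). lia.
Qed.

Lemma last_below_unique n f y : y < n -> (forall x, x < n -> f x = (x =? y)) ->
  last_below n f = y.
Proof.
  induction n as [| n IHn]; intros Hy Hf; cbn; [lia |].
  rewrite Hf by lia. destruct (Nat.eqb_spec n y); auto.
  apply IHn; auto. lia.
Qed.

Lemma testbit_add_shifted a b n m : a < 2 ^ n ->
  Nat.testbit (a + 2 ^ n * b) m = if m <? n then Nat.testbit a m else Nat.testbit b (m - n).
Proof.
  intros Ha. assert (Hp : 2 ^ n <> 0) by (apply Nat.pow_nonzero; lia).
  destruct (Nat.ltb_spec m n).
  - rewrite <- (Nat.mod_pow2_bits_low _ n m) by auto.
    now rewrite Nat.mul_comm, Nat.Div0.mod_add, Nat.mod_small.
  - replace m with (m - n + n) at 1 by lia.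
    rewrite <- Nat.div_pow2_bits, Nat.mul_comm, Nat.div_add by auto.
    now rewrite Nat.div_small.
Qed.

Lemma bits_lt n f : bits n f < 2 ^ n.
Proof. induction n as [| n IHn]; cbn; auto. destruct (f n); cbn; lia. Qed.

Lemma testbit_bits n f m : Nat.testbit (bits n f) m = (m <? n) && f m.
Proof.
  induction n as [| n IHn]; cbn [bits].
  - now rewrite Nat.bits_0.
  - rewrite testbit_add_shifted, IHn by apply bits_lt.
    destruct (Nat.ltb_spec m n), (Nat.ltb_spec m (S n)); try lia; [easy | |].
    + replace m with n by lia. rewrite Nat.sub_diag. now destruct (f n).
    + destruct (m - n) as [| j] eqn:E; [lia |].
      destruct (f n); cbn; apply Nat.bits_0.
Qed.

Lemma pair_to_nat a b : pair a b = Cantor.to_nat (a, b).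
Proof.
  unfold pair. rewrite Cantor.to_nat_spec2, (Nat.add_comm b a), Nat.add_1_r. lia.
Qed.

Lemma pair_inj a b a' b' : pair a b = pair a' b' -> a = a' /\ b = b'.
Proof. rewrite !pair_to_nat. now intros [= -> ->] %Cantor.to_nat_inj. Qed.

Lemma pair_ge a b : a + b <= pair a b.
Proof. rewrite pair_to_nat, Nat.add_comm. apply Cantor.to_nat_non_decreasing. Qed.

(* Bounded search suffices because both components are at most the code. *)
Definition unpair1 (n : nat) : nat :=
  last_below (S n) (fun a => ex_below (S n) (fun b => pair a b =? n)).
Definition unpair2 (n : nat) : nat :=
  last_below (S n) (fun b => ex_below (S n) (fun a => pair a b =? n)).

Lemma unpair1_pair a b : unpair1 (pair a b) = a.
Proof.
  pose proof (pair_ge a b).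
  apply last_below_unique; [lia |]. intros x _.
  apply eq_true_iff_eq. rewrite ex_below_spec, Nat.eqb_eq. split.
  - intros (y & _ & E%Nat.eqb_eq). now apply pair_inj in E.
  - intros ->. exists b. split; [lia | apply Nat.eqb_refl].
Qed.

Lemma unpair2_pair a b : unpair2 (pair a b) = b.
Proof.
  pose proof (pair_ge a b).
  apply last_below_unique; [lia |]. intros x _.
  apply eq_true_iff_eq. rewrite ex_below_spec, Nat.eqb_eq. split.
  - intros (y & _ & E%Nat.eqb_eq). now apply pair_inj in E.
  - intros ->. exists a. split; [lia | apply Nat.eqb_refl].
Qed.

Definition pair_p : recf :=
  let s := RComp add_p [#0; #1] in
  RComp add_p [RComp div2_p [RComp mul_p [s; succ_p s]]; #1].
Lemma eval_pair a b : eval pair_p [a; b] = pair a b.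
Proof.
  cbn. rewrite eval_add, eval_mul, eval_div2, eval_add, Nat.div2_div.
  unfold pair. now rewrite Nat.add_1_r.
Qed.
Opaque pair_p.

Definition unpair1_p : recf :=
  last_p 1 (succ_p #0) (ex_p 2 (succ_p #1) (RComp eqb_p [RComp pair_p [#1; #0]; #2])).
Lemma eval_unpair1 n : eval unpair1_p [n] = unpair1 n.
Proof.
  unfold unpair1_p, unpair1.
  apply (eval_last 1 (succ_p #0) _ [n] (fun a => ex_below (S n) (fun b => pair a b =? n)));
    [easy |].
  intros a. apply (eval_ex 2 (succ_p #1) _ [a; n] (fun b => pair a b =? n)); [easy |].
  intros b. cbn [eval map nth]. now rewrite eval_pair, eval_eqb.
Qed.

Definition unpair2_p : recf :=
  last_p 1 (succ_p #0) (ex_p 2 (succ_p #1) (RComp eqb_p [RComp pair_p [#0; #1]; #2])).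
Lemma eval_unpair2 n : eval unpair2_p [n] = unpair2 n.
Proof.
  unfold unpair2_p, unpair2.
  apply (eval_last 1 (succ_p #0) _ [n] (fun b => ex_below (S n) (fun a => pair a b =? n)));
    [easy |].
  intros b. apply (eval_ex 2 (succ_p #1) _ [b; n] (fun a => pair a b =? n)); [easy |].
  intros a. cbn [eval map nth]. now rewrite eval_pair, eval_eqb.
Qed.
Opaque unpair1_p unpair2_p.

(** * Models encoded by numbers *)

Section DecodedModel.
Variables (N r s t : nat).

Definition dec_rel (x y : nat) : Prop := x < N /\ y < N /\ Nat.testbit r (x * N + y) = true.
Definition dec_val (p x : nat) : Prop := Nat.testbit s (p * N + x) = true.
Definition dec_nom (i : nat) : nat := last_below N (fun x => Nat.testbit t (i * N + x)).

Definition is_ortho : bool :=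
  all_below N (fun x => negb (Nat.testbit r (x * N + x))) &&
  all_below N (fun x => all_below N (fun y =>
    implb (Nat.testbit r (x * N + y)) (Nat.testbit r (y * N + x)))).

Lemma is_ortho_spec : is_ortho = true <-> orthoframe dec_rel.
Proof.
  unfold is_ortho, orthoframe, dec_rel.
  rewrite andb_true_iff, !all_below_spec. split.
  - intros [Hirr Hsym]. split.
    + intros x (Hx & _ & E). specialize (Hirr x Hx). now rewrite E in Hirr.
    + intros x y (Hx & Hy & E). specialize (Hsym x Hx). rewrite all_below_spec in Hsym.
      specialize (Hsym y Hy). now rewrite E in Hsym.
  - intros [Hirr Hsym]. split.
    + intros x Hx. apply negb_true_iff, not_true_iff_false. intros E. now apply (Hirr x).
    + intros x Hx. apply all_below_spec. intros y Hy.
      destruct (Nat.testbit r (x * N + y)) eqn:E; [| easy].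
      now apply Hsym.
Qed.

(* Row [k] of the table is the truth set of the formula with code [k]; the tag
   [unpair1 k] is its constructor, numbered as in [code]. *)
Definition table_step (k x H : nat) : bool :=
  let a := unpair2 k in
  match unpair1 k with
  | 0 => Nat.testbit s (a * N + x)
  | 1 => x =? dec_nom a
  | 2 => negb (Nat.testbit H (a * N + x))
  | 3 => Nat.testbit H (unpair1 a * N + x) && Nat.testbit H (unpair2 a * N + x)
  | 4 => ex_below N (fun y => Nat.testbit r (x * N + y) && Nat.testbit H (a * N + y))
  | 5 => Nat.testbit H (unpair2 a * N + dec_nom (unpair1 a))
  | _ => false
  end.

Fixpoint table (k : nat) : nat :=
  match k with
  | 0 => 0
  | S k => table k + 2 ^ (k * N) * bits N (fun x => table_step k x (table k))
  end.

Lemma table_lt k : table k < 2 ^ (k * N).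
Proof.
  induction k as [| k IHk]; cbn [table]; [cbn; lia |].
  pose proof (bits_lt N (fun x => table_step k x (table k))).
  replace (S k * N) with (k * N + N) by lia. rewrite Nat.pow_add_r. nia.
Qed.

Lemma testbit_table k j x : j < k -> x < N ->
  Nat.testbit (table k) (j * N + x) = table_step j x (table j).
Proof.
  intros Hj Hx. induction k as [| k IHk]; [lia |]. cbn [table].
  rewrite testbit_add_shifted by apply table_lt.
  destruct (Nat.ltb_spec (j * N + x) (k * N)).
  - apply IHk. destruct (Nat.lt_ge_cases j k); [easy | nia].
  - assert (j = k) as -> by (destruct (Nat.lt_ge_cases j k); nia).
    rewrite testbit_bits. replace (k * N + x - k * N) with x by lia.
    now destruct (Nat.ltb_spec x N); [| lia].
Qed.

Lemma table_sat phi k x : 0 < N -> code phi < k -> x < N ->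
  Nat.testbit (table k) (code phi * N + x) = true <-> sat dec_rel dec_val dec_nom x phi.
Proof.
  intros HN. revert k x.
  induction phi as [p | i | a IHa | a IHa b IHb | a IHa | i a IHa]; intros k x Hk Hx;
    rewrite testbit_table by auto; unfold table_step; cbn [code sat] in *;
    rewrite unpair1_pair, unpair2_pair.
  - reflexivity.
  - apply Nat.eqb_eq.
  - pose proof (pair_ge 2 (code a)).
    rewrite negb_true_iff, <- not_true_iff_false, (IHa (pair 2 (code a)) x) by lia.
    reflexivity.
  - pose proof (pair_ge 3 (pair (code a) (code b))). pose proof (pair_ge (code a) (code b)).
    set (c := pair 3 _) in *.
    rewrite unpair1_pair, unpair2_pair, andb_true_iff, (IHa c x), (IHb c x) by lia.
    reflexivity.
  - pose proof (pair_ge 4 (code a)).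
    rewrite ex_below_spec. split.
    + intros (y & Hy & (Er & Ea)%andb_true_iff).
      exists y. split; [easy |]. apply (IHa (pair 4 (code a))); auto. lia.
    + intros (y & (_ & Hy & Er) & Ha). exists y. split; [easy |].
      apply andb_true_iff. split; [easy |]. apply (IHa (pair 4 (code a))); auto. lia.
  - pose proof (pair_ge 5 (pair i (code a))). pose proof (pair_ge i (code a)).
    rewrite unpair1_pair, unpair2_pair.
    apply IHa; [lia |]. now apply last_below_lt.
Qed.
End DecodedModel.

(** * Computing the satisfaction table *)

Fixpoint switch_p (tag : recf) (i : nat) (bs : list recf) (d : recf) : recf :=
  match bs with
  | [] => d
  | b :: bs => RComp ifz_p [RComp sub_p [tag; const_p i]; b; switch_p tag (S i) bs d]
  end.
Lemma eval_switch tag bs d v i : i <= eval tag v ->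
  eval (switch_p tag i bs d) v = nth (eval tag v - i) (map (fun b => eval b v) bs) (eval d v).
Proof.
  revert i. induction bs as [| b bs IH]; intros i Hi; cbn [switch_p map];
    [now destruct (_ - i) |].
  cbn [eval map]. rewrite eval_const, eval_sub, eval_ifz.
  destruct (eval tag v - i) as [| m] eqn:E; [easy |].
  rewrite IH by lia. now replace (eval tag v - S i) with m by lia.
Qed.

Definition bit_p (H A N X : recf) : recf :=
  RComp testbit_p [H; RComp add_p [RComp mul_p [A; N]; X]].
Lemma eval_bit H A N X v :
  eval (bit_p H A N X) v = Nat.b2n (Nat.testbit (eval H v) (eval A v * eval N v + eval X v)).
Proof. unfold bit_p. cbn [eval map]. now rewrite eval_mul, eval_add, eval_testbit. Qed.
Opaque bit_p.

Definition dec_nom_p : recf := last_p 3 #0 (bit_p #2 #3 #1 #0).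
Lemma eval_dec_nom N t i : eval dec_nom_p [N; t; i] = dec_nom N t i.
Proof.
  unfold dec_nom_p. rewrite (eval_last 3 _ _ _ (fun x => Nat.testbit t (i * N + x))); auto.
  intros x. now rewrite eval_bit.
Qed.
Opaque dec_nom_p.

Definition table_step_p : recf :=
  let a := RComp unpair2_p [#1] in
  switch_p (RComp unpair1_p [#1]) 0
    [bit_p #5 a #3 #0;
     RComp eqb_p [#0; RComp dec_nom_p [#3; #6; a]];
     RComp not_p [bit_p #2 a #3 #0];
     RComp mul_p [bit_p #2 (RComp unpair1_p [a]) #3 #0; bit_p #2 (RComp unpair2_p [a]) #3 #0];
     ex_p 7 #3 (RComp mul_p [bit_p #5 #1 #4 #0; bit_p #3 (RComp unpair2_p [#2]) #4 #0]);
     bit_p #2 (RComp unpair2_p [a]) #3 (RComp dec_nom_p [#3; #6; RComp unpair1_p [a]])]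
    (const_p 0).
Lemma eval_table_step x k H N r s t :
  eval table_step_p [x; k; H; N; r; s; t] = Nat.b2n (table_step N r s t k x H).
Proof.
  unfold table_step_p. rewrite eval_switch by lia. cbn [eval map nth].
  rewrite eval_unpair1, Nat.sub_0_r. unfold table_step.
  destruct (unpair1 k) as [|[|[|[|[|[|m]]]]]]; cbn [nth];
    rewrite ?eval_bit; cbn [eval map nth];
    rewrite ?eval_unpair1, ?eval_unpair2, ?eval_dec_nom, ?eval_eqb, ?eval_not, ?eval_and;
    try reflexivity.
  - rewrite (eval_ex 7 _ _ _
      (fun y => Nat.testbit r (x * N + y) && Nat.testbit H (unpair2 k * N + y))); auto.
    intros y. cbn [eval map]. rewrite !eval_bit. cbn [eval map nth].
    now rewrite eval_unpair2, eval_and.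
  - destruct m; apply eval_const.
Qed.
Opaque table_step_p.

Definition table_p : recf :=
  RPrec (const_p 0)
    (RComp add_p [#1; RComp mul_p [RComp pow2_p [RComp mul_p [#0; #2]]; bits_p 6 #2 table_step_p]]).
Lemma eval_table k N r s t : eval table_p [k; N; r; s; t] = table N r s t k.
Proof.
  unfold table_p. induction k as [| k IHk]; [apply eval_const |].
  rewrite eval_prec_succ, IHk. cbn [eval map nth table].
  rewrite (eval_bits 6 _ _ _ (fun x => table_step N r s t k x (table N r s t k))); auto.
  - cbn [eval nth]. now rewrite eval_mul, eval_pow2, eval_mul, eval_add.
  - intros x. apply eval_table_step.
Qed.
Opaque table_p.

Definition is_ortho_p : recf :=
  RComp mul_p
    [all_p 2 #0 (RComp not_p [bit_p #2 #0 #1 #0]);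
     all_p 2 #0 (all_p 3 #1 (RComp or_p [RComp not_p [bit_p #3 #1 #2 #0]; bit_p #3 #0 #2 #1]))].
Lemma eval_is_ortho N r : eval is_ortho_p [N; r] = Nat.b2n (is_ortho N r).
Proof.
  unfold is_ortho_p, is_ortho. cbn [eval map].
  rewrite (eval_all 2 _ _ _ (fun x => negb (Nat.testbit r (x * N + x)))); auto.
  2:{ intros x. cbn [eval map]. now rewrite eval_bit, eval_not. }
  rewrite (eval_all 2 _ _ _ (fun x => all_below N (fun y =>
    implb (Nat.testbit r (x * N + y)) (Nat.testbit r (y * N + x))))); auto.
  2:{ intros x. rewrite (eval_all 3 _ _ _ (fun y =>
        implb (Nat.testbit r (x * N + y)) (Nat.testbit r (y * N + x)))); auto.
      intros y. cbn [eval map]. rewrite !eval_bit, eval_not, eval_or. cbn [eval nth].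
      now destruct (Nat.testbit r (x * N + y)). }
  apply eval_and.
Qed.
Opaque is_ortho_p.

Definition check_model (c N r s t : nat) : bool :=
  negb (is_ortho N r) || all_below N (fun x => Nat.testbit (table N r s t (S c)) (c * N + x)).

Definition check_model_p : recf :=
  RComp or_p
    [RComp not_p [RComp is_ortho_p [#1; #2]];
     all_p 5 #1 (bit_p (RComp table_p [succ_p #1; #2; #3; #4; #5]) #1 #2 #0)].
Lemma eval_check_model c N r s t :
  eval check_model_p [c; N; r; s; t] = Nat.b2n (check_model c N r s t).
Proof.
  unfold check_model_p, check_model. cbn [eval map nth].
  rewrite (eval_all 5 _ _ _ (fun x => Nat.testbit (table N r s t (S c)) (c * N + x))); auto.
  - now rewrite eval_is_ortho, eval_not, eval_or.
  - intros x. rewrite eval_bit. cbn [eval map nth]. now rewrite eval_table.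
Qed.
Opaque check_model_p.

Definition bound (c : nat) : nat := 2 ^ (c + 2).

Definition check (c : nat) : bool :=
  let N := bound c in
  all_below (2 ^ (N * N)) (fun r =>
  all_below (2 ^ (S c * N)) (fun s =>
  all_below (2 ^ (S c * N)) (fun t => check_model c N r s t))).

Definition decider : recf :=
  RComp not_p [RComp
    (all_p 2 (RComp pow2_p [RComp mul_p [#1; #1]])
      (all_p 3 (RComp pow2_p [RComp mul_p [succ_p #1; #2]])
        (all_p 4 (RComp pow2_p [RComp mul_p [succ_p #2; #3]])
          (RComp check_model_p [#3; #4; #2; #1; #0]))))
    [#0; RComp pow2_p [RComp add_p [#0; const_p 2]]]].

Lemma eval_decider c : eval decider [c] = Nat.b2n (negb (check c)).
Proof.
  unfold decider, check. cbn [eval map nth].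
  rewrite eval_const, eval_add, eval_pow2. fold (bound c). set (N := bound c).
  rewrite (eval_all 2 _ _ _ (fun r => all_below (2 ^ (S c * N)) (fun s =>
    all_below (2 ^ (S c * N)) (fun t => check_model c N r s t)))); auto.
  - cbn [eval map nth]. now rewrite eval_mul, eval_pow2, eval_not.
  - intros r. rewrite (eval_all 3 _ _ _ (fun s =>
      all_below (2 ^ (S c * N)) (fun t => check_model c N r s t))); auto.
    + cbn [eval map nth]. now rewrite eval_mul, eval_pow2.
    + intros s. rewrite (eval_all 4 _ _ _ (fun t => check_model c N r s t)); auto.
      * cbn [eval map nth]. now rewrite eval_mul, eval_pow2.
      * intros t. apply eval_check_model.
Qed.

Lemma decider_arity : prim_arity decider 1 = true.
Proof. vm_compute. reflexivity. Qed.

Lemma check_model_spec phi N r s t : 0 < N ->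
  check_model (code phi) N r s t = true <->
  (orthoframe (dec_rel N r) ->
   forall x, x < N -> sat (dec_rel N r) (dec_val N s) (dec_nom N t) x phi).
Proof.
  intros HN. unfold check_model.
  rewrite <- is_ortho_spec, orb_true_iff, negb_true_iff, all_below_spec.
  assert (Hrow : forall x, x < N ->
    Nat.testbit (table N r s t (S (code phi))) (code phi * N + x) = true <->
    sat (dec_rel N r) (dec_val N s) (dec_nom N t) x phi) by (intros; apply table_sat; auto).
  destruct (is_ortho N r); split; intros H.
  - intros _ x Hx. apply Hrow; auto. destruct H as [H | H]; [discriminate | auto].
  - right. intros x Hx. apply Hrow, H; auto.
  - discriminate.
  - now left.
Qed.

Lemma bound_pos c : 0 < bound c.
Proof. apply Nat.neq_0_lt_0, Nat.pow_nonzero. lia. Qed.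

(** * Encoding finite models *)

Fixpoint symbols_le (c : nat) (phi : form) : Prop :=
  match phi with
  | PVar p => p <= c
  | Nom i => i <= c
  | Neg a => symbols_le c a
  | And a b => symbols_le c a /\ symbols_le c b
  | Dia a => symbols_le c a
  | At i a => i <= c /\ symbols_le c a
  end.

Lemma symbols_le_code phi c : code phi <= c -> symbols_le c phi.
Proof.
  revert c. induction phi as [p | i | a IHa | a IHa b IHb | a IHa | i a IHa];
    intros c Hc; cbn [code symbols_le] in *.
  - pose proof (pair_ge 0 p). lia.
  - pose proof (pair_ge 1 i). lia.
  - pose proof (pair_ge 2 (code a)). apply IHa. lia.
  - pose proof (pair_ge 3 (pair (code a) (code b))). pose proof (pair_ge (code a) (code b)).
    split; [apply IHa | apply IHb]; lia.
  - pose proof (pair_ge 4 (code a)). apply IHa. lia.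
  - pose proof (pair_ge 5 (pair i (code a))). pose proof (pair_ge i (code a)).
    split; [lia | apply IHa; lia].
Qed.

Lemma sat_agree {W : Type} (D : W -> Prop) (R1 R2 : W -> W -> Prop) V1 V2 N1 N2 c :
  (forall x y, R1 x y <-> R2 x y) ->
  (forall x y, R2 x y -> D y) ->
  (forall p x, p <= c -> D x -> (V1 p x <-> V2 p x)) ->
  (forall i, i <= c -> N1 i = N2 i /\ D (N2 i)) ->
  forall phi x, symbols_le c phi -> D x -> (sat R1 V1 N1 x phi <-> sat R2 V2 N2 x phi).
Proof.
  intros HR HRD HV HN phi.
  induction phi as [p | i | a IHa | a IHa b IHb | a IHa | i a IHa];
    intros x Hc Hx; cbn [sat symbols_le] in *.
  - now apply HV.
  - now rewrite (proj1 (HN i Hc)).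
  - now rewrite IHa.
  - now rewrite IHa, IHb by tauto.
  - split; intros (y & Hxy & Hy); exists y.
    + apply HR in Hxy. rewrite <- IHa by eauto. auto.
    + rewrite IHa by eauto. now split; [apply HR |].
  - destruct Hc as [Hi Hc]. destruct (HN i Hi) as [-> HD]. now apply IHa.
Qed.

Definition classic_bool (P : Prop) : bool :=
  if excluded_middle_informative P then true else false.

Lemma classic_bool_true P : classic_bool P = true <-> P.
Proof. unfold classic_bool. destruct (excluded_middle_informative P); intuition discriminate. Qed.

Lemma cell_div_mod x y N : y < N -> (x * N + y) / N = x /\ (x * N + y) mod N = y.
Proof.
  intros Hy. split.
  - rewrite Nat.div_add_l, Nat.div_small by lia. lia.
  - rewrite Nat.add_comm, Nat.Div0.mod_add. now apply Nat.mod_small.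
Qed.

Lemma encode_model c N (R' V' : nat -> nat -> Prop) (Nm' : nat -> nat) :
  (forall x y, R' x y -> x < N /\ y < N) -> (forall i, Nm' i < N) ->
  exists r s t, r < 2 ^ (N * N) /\ s < 2 ^ (S c * N) /\ t < 2 ^ (S c * N) /\
    (forall x y, dec_rel N r x y <-> R' x y) /\
    (forall p x, p <= c -> x < N -> (dec_val N s p x <-> V' p x)) /\
    (forall i, i <= c -> dec_nom N t i = Nm' i).
Proof.
  intros HR HNm.
  exists (bits (N * N) (fun j => classic_bool (R' (j / N) (j mod N)))),
         (bits (S c * N) (fun j => classic_bool (V' (j / N) (j mod N)))),
         (bits (S c * N) (fun j => j mod N =? Nm' (j / N))).
  split; [apply bits_lt |]. split; [apply bits_lt |]. split; [apply bits_lt |].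
  unfold dec_rel, dec_val, dec_nom. split; [| split].
  - intros x y. rewrite testbit_bits, andb_true_iff, Nat.ltb_lt. split.
    + intros (Hx & Hy & _ & E). destruct (cell_div_mod x y N Hy) as [E1 E2].
      now rewrite E1, E2, classic_bool_true in E.
    + intros H. destruct (HR x y H) as [Hx Hy]. destruct (cell_div_mod x y N Hy) as [E1 E2].
      rewrite E1, E2, classic_bool_true. repeat split; auto. nia.
  - intros p x Hp Hx. rewrite testbit_bits. destruct (cell_div_mod p x N Hx) as [-> ->].
    replace (p * N + x <? S c * N) with true by (symmetry; apply Nat.ltb_lt; nia).
    apply classic_bool_true.
  - intros i Hi. apply last_below_unique; [apply HNm |]. intros x Hx.
    rewrite testbit_bits. destruct (cell_div_mod i x N Hx) as [-> ->].
    replace (i * N + x <? S c * N) with true by (symmetry; apply Nat.ltb_lt; nia).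
    reflexivity.
Qed.

(** * Filtration *)

Fixpoint subformulas (phi : form) : list form :=
  match phi with
  | PVar p => [PVar p]
  | Nom i => [Nom i]
  | Neg a => Neg a :: subformulas a
  | And a b => And a b :: subformulas a ++ subformulas b
  | Dia a => Dia a :: subformulas a
  | At i a => At i a :: Nom i :: subformulas a
  end.

Lemma subformulas_self phi : In phi (subformulas phi).
Proof. destruct phi; cbn; auto. Qed.

Lemma length_subformulas phi : length (subformulas phi) <= code phi + 1.
Proof.
  induction phi as [p | i | a IHa | a IHa b IHb | a IHa | i a IHa];
    cbn [code subformulas length]; rewrite ?length_app.
  - lia.
  - pose proof (pair_ge 1 i). lia.
  - pose proof (pair_ge 2 (code a)). lia.
  - pose proof (pair_ge 3 (pair (code a) (code b))). pose proof (pair_ge (code a) (code b)). lia.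
  - pose proof (pair_ge 4 (code a)). lia.
  - pose proof (pair_ge 5 (pair i (code a))). pose proof (pair_ge i (code a)). lia.
Qed.

(* World [copy a e] of the filtration is copy [e] of the class of worlds with
   profile [a]. *)
Definition copy (a : nat) (e : bool) : nat := 2 * a + Nat.b2n e.

Lemma div2_copy a e : Nat.div2 (copy a e) = a.
Proof.
  unfold copy. destruct e; cbn [Nat.b2n].
  - apply Nat.div2_odd'.
  - now rewrite Nat.add_0_r, Nat.div2_double.
Qed.

Lemma odd_copy a e : Nat.odd (copy a e) = e.
Proof.
  unfold copy. destruct e; cbn [Nat.b2n].
  - apply Nat.odd_odd.
  - now rewrite Nat.add_0_r, Nat.odd_even.
Qed.

Section Filtration.
Variables (W : Type) (R : W -> W -> Prop) (V : nat -> W -> Prop) (Nm : nat -> W) (phi : form).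
Hypothesis Hortho : orthoframe R.

Let Sub := subformulas phi.

Definition profile (u : W) : nat :=
  bits (length Sub) (fun j => classic_bool (sat R V Nm u (nth j Sub (PVar 0)))).

Lemma profile_sat u u' psi : profile u = profile u' -> In psi Sub ->
  (sat R V Nm u psi <-> sat R V Nm u' psi).
Proof.
  intros E Hin. apply (In_nth _ _ (PVar 0)) in Hin as (j & Hj & <-).
  apply (f_equal (fun n => Nat.testbit n j)) in E. unfold profile in E.
  rewrite !testbit_bits in E. apply Nat.ltb_lt in Hj. rewrite Hj in E. cbn in E.
  split; intros H; apply classic_bool_true; [rewrite <- E | rewrite E];
    now apply classic_bool_true.
Qed.

Definition named (a : nat) : Prop := exists i, In (Nom i) Sub /\ profile (Nm i) = a.

Lemma named_profile i u : In (Nom i) Sub -> profile u = profile (Nm i) -> u = Nm i.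
Proof. intros Hin E. now apply (profile_sat _ _ _ E Hin). Qed.

Definition realized (z : nat) : Prop :=
  (exists u, profile u = Nat.div2 z) /\ (Nat.odd z = true -> ~ named (Nat.div2 z)).

Definition frel (z z' : nat) : Prop :=
  realized z /\ realized z' /\
  (exists u v, profile u = Nat.div2 z /\ profile v = Nat.div2 z' /\ R u v) /\
  (named (Nat.div2 z) \/ named (Nat.div2 z') \/ Nat.odd z <> Nat.odd z').

Definition fval (p z : nat) : Prop := exists u, profile u = Nat.div2 z /\ V p u.

Definition fnom (i : nat) : nat := copy (profile (Nm i)) false.

Lemma realized_copy u : realized (copy (profile u) false).
Proof.
  split.
  - exists u. now rewrite div2_copy.
  - now rewrite odd_copy.
Qed.

Lemma realized_copy_unnamed u e : ~ named (profile u) -> realized (copy (profile u) e).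
Proof.
  intros Hu. split.
  - exists u. now rewrite div2_copy.
  - now rewrite div2_copy.
Qed.

Lemma realized_lt z : realized z -> z < 2 ^ S (length Sub).
Proof.
  intros [[u Eu] _]. pose proof (bits_lt (length Sub) (fun j =>
    classic_bool (sat R V Nm u (nth j Sub (PVar 0))))) as Hu.
  fold (profile u) in Hu. rewrite Eu in Hu.
  rewrite (Nat.div2_odd z), Nat.pow_succ_r'. destruct (Nat.odd z); cbn [Nat.b2n]; lia.
Qed.

Lemma frel_ortho : orthoframe frel.
Proof.
  destruct Hortho as [Hirr Hsym]. split.
  - intros z (_ & _ & (u & v & Eu & Ev & Ruv) & Hd).
    destruct Hd as [(i & Hin & Ei) | [(i & Hin & Ei) | Hd]]; [| | easy];
      rewrite <- Ei in Eu, Ev; apply named_profile in Eu, Ev; auto;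
      subst; now apply (Hirr (Nm i)).
  - intros z z' (Hz & Hz' & (u & v & Eu & Ev & Ruv) & Hd).
    do 2 (split; [easy |]). split.
    + exists v, u. auto.
    + destruct Hd as [Hd | [Hd | Hd]]; auto.
Qed.

Lemma frel_witness z u v : realized z -> profile u = Nat.div2 z -> R u v ->
  exists z', frel z z' /\ profile v = Nat.div2 z'.
Proof.
  intros Hz Eu Ruv.
  destruct (classic (named (profile v) \/ named (Nat.div2 z))) as [Hn | Hn].
  - exists (copy (profile v) false). split; [| now rewrite div2_copy].
    split; [easy | split; [apply realized_copy |]]. rewrite div2_copy. split.
    + now exists u, v.
    + tauto.
  - exists (copy (profile v) (negb (Nat.odd z))). split; [| now rewrite div2_copy].
    split; [easy | split; [apply realized_copy_unnamed; tauto |]].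
    rewrite div2_copy, odd_copy. split.
    + now exists u, v.
    + right; right. now destruct (Nat.odd z).
Qed.

Lemma filtration_sat psi z u :
  incl (subformulas psi) Sub -> realized z -> profile u = Nat.div2 z ->
  (sat frel fval fnom z psi <-> sat R V Nm u psi).
Proof.
  revert z u.
  induction psi as [p | i | a IHa | a IHa b IHb | a IHa | i a IHa]; intros z u Hsub Hz Eu;
    pose proof (Hsub _ (subformulas_self _)) as Hin; cbn [sat subformulas] in *.
  - split.
    + intros (u' & E' & Hv). apply (profile_sat u' u (PVar p)); auto. congruence.
    + intros Hv. now exists u.
  - unfold fnom. split.
    + intros ->. rewrite div2_copy in Eu. now apply named_profile.
    + intros ->. destruct Hz as [_ Hz].
      assert (Hodd : Nat.odd z = false).
      { destruct (Nat.odd z); [| easy]. exfalso. apply (Hz eq_refl). now exists i. }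
      rewrite (Nat.div2_odd z), Hodd, <- Eu. reflexivity.
  - apply incl_cons_inv in Hsub as [_ Ha]. now rewrite (IHa z u).
  - apply incl_cons_inv in Hsub as [_ Hsub]. apply incl_app_inv in Hsub as [Ha Hb].
    now rewrite (IHa z u), (IHb z u).
  - apply incl_cons_inv in Hsub as [_ Ha]. split.
    + intros (z' & (_ & Hz' & (u1 & v1 & Eu1 & Ev1 & Ruv) & _) & Hs).
      apply (profile_sat u1 u (Dia a)); [congruence | easy |].
      exists v1. split; [easy |]. now apply (IHa z').
    + intros (v & Ruv & Hv). destruct (frel_witness z u v Hz Eu Ruv) as (z' & Hzz' & Ev).
      exists z'. split; [easy |]. apply (IHa z' v); auto. apply Hzz'.
  - apply incl_cons_inv in Hsub as [_ Hsub]. apply incl_cons_inv in Hsub as [_ Ha].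
    apply IHa; [easy | apply realized_copy | unfold fnom; now rewrite div2_copy].
Qed.

Lemma filtration_model w M : 2 ^ S (length Sub) <= M ->
  exists (R' V' : nat -> nat -> Prop) (Nm' : nat -> nat) z,
    orthoframe R' /\ (forall x y, R' x y -> x < M /\ y < M) /\ (forall i, Nm' i < M) /\
    z < M /\ (sat R' V' Nm' z phi <-> sat R V Nm w phi).
Proof.
  intros HM. exists frel, fval, fnom, (copy (profile w) false).
  split; [apply frel_ortho |]. split; [| split; [| split]].
  - intros x y (Hx & Hy & _). apply realized_lt in Hx, Hy. lia.
  - intros i. pose proof (realized_lt _ (realized_copy (Nm i))). unfold fnom. lia.
  - pose proof (realized_lt _ (realized_copy w)). lia.
  - apply filtration_sat; [apply incl_refl | apply realized_copy | now rewrite div2_copy].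
Qed.
End Filtration.

Lemma IB_valid_check phi : IB_valid phi -> check (code phi) = true.
Proof.
  intros Hvalid. unfold check.
  apply all_below_spec. intros r _. apply all_below_spec. intros s _.
  apply all_below_spec. intros t _.
  apply check_model_spec; [apply bound_pos |]. intros Ho x _. now apply Hvalid.
Qed.

Lemma check_IB_valid phi : check (code phi) = true -> IB_valid phi.
Proof.
  intros Hcheck W R V Nm Hortho w.
  set (N := bound (code phi)).
  assert (HM : 2 ^ S (length (subformulas phi)) <= N).
  { apply Nat.pow_le_mono_r; [lia |]. pose proof (length_subformulas phi). lia. }
  destruct (filtration_model W R V Nm phi Hortho w N HM)
    as (R' & V' & Nm' & z & [Hirr Hsym] & HR' & HNm' & Hz & Hsat).
  destruct (encode_model (code phi) N R' V' Nm' HR' HNm')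
    as (r & s & t & Hr & Hs & Ht & ER & EV & EN).
  assert (Hmodel : check_model (code phi) N r s t = true).
  { unfold check in Hcheck. fold N in Hcheck.
    rewrite all_below_spec in Hcheck. specialize (Hcheck r Hr).
    rewrite all_below_spec in Hcheck. specialize (Hcheck s Hs).
    rewrite all_below_spec in Hcheck. exact (Hcheck t Ht). }
  rewrite check_model_spec in Hmodel by apply bound_pos.
  apply Hsat, (sat_agree (fun x => x < N) (dec_rel N r) R' (dec_val N s) V' (dec_nom N t) Nm'
    (code phi)); auto using symbols_le_code.
  - intros x y Hxy. apply (HR' x y Hxy).
  - apply Hmodel; [| easy]. split; intros *; rewrite !ER; auto.
Qed.

Lemma check_correct phi : check (code phi) = true <-> IB_valid phi.
Proof. split; [apply check_IB_valid | apply IB_valid_check]. Qed.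

Theorem corollary1 : decidable_form_set IB_valid.
Proof.
  exists decider. intros phi.
  pose proof (ev_eval decider [code phi] decider_arity) as Hev.
  rewrite eval_decider in Hev. rewrite <- check_correct.
  destruct (check (code phi)); split; easy.
Qed.
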